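(* Let $F_0$ be a QF-NIA formula, and let $F$ be a linearization of $F_0$ with artificial bounds $B$. Let $\mathrm{vars}(B)$ be the set of variables $V$ for which an artificial domain $[l_V,u_V]$ is imposed by $B$ (each bound of $B$ being of the form $l_V\le V$ or $V\le u_V$ for some $V\in\mathrm{vars}(B)$). For a model $M$ of $F$ define $$\mathrm{cost}(M)=\sum_{V\in\mathrm{vars}(B)}\delta(M(V),[l_V,u_V]),$$ where $\delta(z,[l,u])=l-z$ if $z<l$, $\delta(z,[l,u])=0$ if $l\le z\le u$, and $\delta(z,[l,u])=z-u$ if $z>u$. Then $\mathrm{cost}$ is admissible: $\mathrm{cost}(M)\ge 0$ for every model $M$ of $F$, and if $\mathrm{cost}(M)=0$ then $M$ (restricted to the variables of $F_0$) is a model of $F_0$.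
   Context: A QF-NIA formula is a quantifier-free CNF formula whose atoms are polynomial inequalities with integer coefficients over integer-valued variables. Artificial bounds are a finite set $B$ of constraints $V\ge L$ or $V\le U$ ($L,U\in\mathbb{Z}$) on variables of $F_0$. A linearization $F$ of $F_0$ with artificial bounds $B$ is a QF-LIA formula obtained as follows. While some non-linear monomial $Q$ occurs, pick a variable $V$ of $Q$ that has both a lower bound $l$ and an upper bound $u$ in $F_0\cup B$. Introduce a fresh integer variable $v_Q$ and replace every occurrence of $Q$ by $v_Q$. Add, for each integer $K$ with $l\le K\le u$, the clause $V=K\rightarrow v_Q=Q[V:=K]$, where $Q[V:=K]$ is $Q$ with $V$ evaluated at $K$. New non-linear monomials appearing in these clauses are processed in the same way. $F$ does not contain the bounds of $B$. A model of $F$ is an integer assignment to all variables of $F$ (original and fresh) satisfying $F$. *)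

From mathcomp Require Import all_boot all_order all_algebra.
From Stdlib Require Lists.List.
Set Implicit Arguments. Unset Strict Implicit. Unset Printing Implicit Defensive.
Import Order.TTheory GRing.Theory Num.Theory.
Local Open Scope ring_scope.

Definition var := nat.
(* A monomial is a multiset of variables (the product of its elements);
   two monomials are the same monomial iff they are permutations of each other. *)
Definition monomial := seq var.
Definition term := (int * monomial)%type.
Definition poly := seq term.
(* An atom is  p REL 0. *)
Inductive rel := Le | Lt | Ge | Gt | Eq | Ne.
Definition atom := (poly * rel)%type.
Definition clause := seq atom.
Definition formula := seq clause.
Definition assignment := var -> int.

Definition eval_mono (s : assignment) (m : monomial) : int := \prod_(x <- m) s x.
Definition eval_poly (s : assignment) (p : poly) : int :=
  \sum_(t <- p) t.1 * eval_mono s t.2.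
Definition eval_rel (r : rel) (z : int) : bool :=
  match r with
  | Le => z <= 0 | Lt => z < 0 | Ge => 0 <= z | Gt => 0 < z
  | Eq => z == 0 | Ne => z != 0
  end.
Definition eval_atom (s : assignment) (a : atom) : bool := eval_rel a.2 (eval_poly s a.1).
Definition eval_clause (s : assignment) (c : clause) : bool := has (eval_atom s) c.
Definition models (s : assignment) (F : formula) : bool := all (eval_clause s) F.

Definition atom_vars (a : atom) : seq var := flatten (map snd a.1).
Definition clause_vars (c : clause) : seq var := flatten (map atom_vars c).
Definition fvars (F : formula) : seq var := flatten (map clause_vars F).

Definition nonlinear (m : monomial) : bool := (1 < size m)%N.
Definition lin_atom (a : atom) : bool := all (fun t => ~~ nonlinear t.2) a.1.
Definition is_linear (F : formula) : bool := all (all lin_atom) F.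

Definition occurs (Q : monomial) (F : formula) : bool :=
  has (has (fun a => has (fun t => perm_eq t.2 Q) a.1)) F.

Definition repl_term (Q : monomial) (v : var) (t : term) : term :=
  if perm_eq t.2 Q then (t.1, [:: v]) else t.
Definition repl_formula (Q : monomial) (v : var) (F : formula) : formula :=
  map (map (fun a => (map (repl_term Q v) a.1, a.2))) F.

(* Q[V:=K] as a term: K^(multiplicity of V in Q) * (Q with V removed) *)
Definition subst_mono (Q : monomial) (V : var) (K : int) : term :=
  (K ^+ count_mem V Q, filter (predC1 V) Q).

(* the clause  V = K -> v = Q[V:=K], i.e.  (V - K != 0) \/ (v - Q[V:=K] = 0) *)
Definition case_clause (Q : monomial) (V v : var) (K : int) : clause :=
  [:: ([:: (1, [:: V]); (- K, [::])], Ne);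
      ([:: (1, [:: v]); (- (subst_mono Q V K).1, (subst_mono Q V K).2)], Eq)].

Definition case_clauses (Q : monomial) (V v : var) (l u : int) : formula :=
  if l <= u then [seq case_clause Q V v (l + i%:Z) | i <- iota 0 (absz (u - l)).+1]
  else [::].

(* Artificial bounds: each entry (V, lo, hi) imposes V >= l if lo = Some l and
   V <= u if hi = Some u; the artificial domain of V is [lo, hi]. *)
Definition abounds := seq (var * option int * option int).
Definition bvars (B : abounds) : seq var := map (fun b => b.1.1) B.

Definition has_lb (F0 : formula) (B : abounds) (V : var) (L : int) : Prop :=
  (exists a : atom, Stdlib.Lists.List.In [:: a] F0 /\ lin_atom a /\
      forall s : assignment, eval_atom s a -> L <= s V)
  \/ (exists ou, Stdlib.Lists.List.In (V, Some L, ou) B).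
Definition has_ub (F0 : formula) (B : abounds) (V : var) (U : int) : Prop :=
  (exists a : atom, Stdlib.Lists.List.In [:: a] F0 /\ lin_atom a /\
      forall s : assignment, eval_atom s a -> s V <= U)
  \/ (exists ol, Stdlib.Lists.List.In (V, ol, Some U) B).

Inductive lin_step (F0 : formula) (B : abounds) : formula -> formula -> Prop :=
| LinStep (F : formula) (Q : monomial) (V : var) (l u : int) (v : var) :
    nonlinear Q -> occurs Q F -> V \in Q ->
    has_lb F0 B V l -> has_ub F0 B V u ->
    v \notin fvars F0 -> v \notin fvars F ->
    lin_step F0 B F (repl_formula Q v F ++ case_clauses Q V v l u).

Inductive lin_steps (F0 : formula) (B : abounds) : formula -> formula -> Prop :=
| LinRefl F : lin_steps F0 B F F
| LinTrans F1 F2 F3 : lin_step F0 B F1 F2 -> lin_steps F0 B F2 F3 -> lin_steps F0 B F1 F3.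

Definition linearization (F0 : formula) (B : abounds) (F : formula) : Prop :=
  lin_steps F0 B F0 F /\ is_linear F.

Definition delta (z : int) (lo hi : option int) : int :=
  match lo with
  | Some l => if z < l then l - z else
              match hi with Some u => if u < z then z - u else 0 | None => 0 end
  | None => match hi with Some u => if u < z then z - u else 0 | None => 0 end
  end.

Definition cost (B : abounds) (M : assignment) : int :=
  \sum_(b <- B) delta (M b.1.1) b.1.2 b.2.

From mathcomp Require Import all_boot all_order all_algebra zify.
From Stdlib Require List.
Set Implicit Arguments. Unset Strict Implicit. Unset Printing Implicit Defensive.
Import Order.TTheory GRing.Theory Num.Theory.
Local Open Scope ring_scope.

(* If the cost is zero, M lies in every artificial
   domain; every bound of F0 is a linear unit clause, which linearization never
   rewrites, so it survives in F and holds under M as well. Hence in each step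
   the case clause for K = M(V) is among the clauses it adds, and it forces
   M(v_Q) = M(Q); replacing v_Q back by Q therefore preserves satisfaction, and
   M models F0 by walking the steps backwards. *)

Lemma all_In (T : Type) (p : pred T) (s : seq T) x :
  all p s -> List.In x s -> p x.
Proof. by move/List.forallb_forall; apply. Qed.

Section Evaluation.
Variable M : assignment.

Lemma eval_mono_subst Q V :
  eval_mono M Q =
    (subst_mono Q V (M V)).1 * eval_mono M (subst_mono Q V (M V)).2.
Proof.
rewrite /eval_mono /= big_filter (bigID (pred1 V)) /=; congr (_ * _).
rewrite (eq_bigr (fun=> M V)) => [|x /eqP -> //].
by rewrite big_const_seq iter_mulr_1.
Qed.

Lemma eval_case_clause Q V v :
  eval_clause M (case_clause Q V v (M V)) = (M v == eval_mono M Q).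
Proof.
rewrite /eval_clause /= /eval_atom /eval_poly /= !big_cons !big_nil.
rewrite /eval_mono /= !big_cons !big_nil !mulr1 !mul1r !addr0 subrr eqxx /=.
by rewrite orbF mulNr subr_eq0 -(eval_mono_subst Q V).
Qed.

Lemma models_repl_formula Q v F :
  M v = eval_mono M Q -> models M (repl_formula Q v F) = models M F.
Proof.
move=> Mv; rewrite /models /repl_formula all_map; apply: eq_all => c /=.
rewrite /eval_clause has_map; apply: eq_has => a /=.
rewrite /eval_atom /eval_poly /= big_map; congr (eval_rel _ _).
apply: eq_bigr => t _; rewrite /repl_term; case: ifP => // t_Q /=.
rewrite /eval_mono big_seq1 Mv; congr (_ * _).
by apply: perm_big; rewrite perm_sym.
Qed.

End Evaluation.

Lemma case_clause_In Q V v l u K : l <= K <= u ->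
  List.In (case_clause Q V v K) (case_clauses Q V v l u).
Proof.
case/andP=> lK Ku; rewrite /case_clauses (le_trans lK Ku).
have -> : K = l + `|K - l|%N by lia.
have i_iota : List.In `|K - l|%N (iota 0 `|u - l|.+1).
  by apply/(List.in_seq `|u - l|.+1 0); lia.
exact: (List.in_map (fun i : nat => case_clause Q V v (l + i%:Z)) _ _ i_iota).
Qed.

Lemma repl_linear_atom Q v (a : atom) : nonlinear Q -> lin_atom a ->
  map (repl_term Q v) a.1 = a.1.
Proof.
move=> nlQ lin_a; rewrite -[RHS]map_id; apply/eq_in_map => t t_a.
rewrite /repl_term; case: ifP => // t_Q.
by move: (allP lin_a t t_a) nlQ; rewrite /nonlinear (perm_size t_Q) => /negbTE ->.
Qed.

Lemma lin_steps_unit_linear F0 B F1 F2 (a : atom) : lin_steps F0 B F1 F2 ->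
  List.In [:: a] F1 -> lin_atom a -> List.In [:: a] F2.
Proof.
elim=> // G1 G2 G3 [F Q V l u v nlQ _ _ _ _ _ _] _ IH a_G1 lin_a.
apply: IH => //; apply: List.in_or_app; left.
pose repl_clause := map (fun b : atom => (map (repl_term Q v) b.1, b.2)).
have -> : [:: a] = repl_clause [:: a] by rewrite /= repl_linear_atom //; case: (a).
exact: (List.in_map repl_clause _ _ a_G1).
Qed.

Section BackwardSoundness.
Variables (F0 : formula) (B : abounds) (M : assignment).
Hypothesis lb_sound : forall V l, has_lb F0 B V l -> l <= M V.
Hypothesis ub_sound : forall V u, has_ub F0 B V u -> M V <= u.

Lemma lin_step_models_inv F1 F2 :
  lin_step F0 B F1 F2 -> models M F2 -> models M F1.
Proof.
case=> F Q V l u v _ _ _ lbV ubV _ _.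
rewrite [models _ _]/models all_cat => /andP[MF Mcases].
have V_bounded : l <= M V <= u by rewrite (lb_sound lbV) (ub_sound ubV).
have case_V := case_clause_In Q V v V_bounded.
have /eqP Mv : M v == eval_mono M Q.
  by rewrite -(eval_case_clause M Q V); apply: all_In Mcases case_V.
by rewrite -(models_repl_formula F Mv).
Qed.

Lemma lin_steps_models_inv F1 F2 :
  lin_steps F0 B F1 F2 -> models M F2 -> models M F1.
Proof.
elim=> // G1 G2 G3 step _ IH /IH; exact: lin_step_models_inv.
Qed.

End BackwardSoundness.

Lemma delta_ge0 z lo hi : 0 <= delta z lo hi.
Proof. rewrite /delta; case: lo hi => [l|] [u|] //; repeat case: ifP; lia. Qed.

Lemma delta_eq0_lb z l hi : delta z (Some l) hi = 0 -> l <= z.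
Proof. rewrite /delta; case: hi => [u|]; repeat case: ifP; lia. Qed.

Lemma delta_eq0_ub z lo u : delta z lo (Some u) = 0 -> z <= u.
Proof. rewrite /delta; case: lo => [l|]; repeat case: ifP; lia. Qed.

Lemma cost_ge0 B M : 0 <= cost B M.
Proof. by apply: sumr_ge0 => b _; apply: delta_ge0. Qed.

Lemma cost_eq0_delta B M b :
  cost B M = 0 -> List.In b B -> delta (M b.1.1) b.1.2 b.2 = 0.
Proof.
move/eqP; rewrite /cost psumr_eq0 => [all0 b_B|i _]; last exact: delta_ge0.
by apply/eqP; apply: (all_In all0 b_B).
Qed.

Section ZeroCost.
Variables (F0 : formula) (B : abounds) (M : assignment).
Hypothesis cost0 : cost B M = 0.
Hypothesis unit_sat : forall a, List.In [:: a] F0 -> lin_atom a -> eval_atom M a.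

Lemma has_lb_sound V l : has_lb F0 B V l -> l <= M V.
Proof.
case=> [[a [a_F0 [lin_a a_lb]]] | [hi V_B]]; first exact/a_lb/unit_sat.
exact: (delta_eq0_lb (cost_eq0_delta cost0 V_B)).
Qed.

Lemma has_ub_sound V u : has_ub F0 B V u -> M V <= u.
Proof.
case=> [[a [a_F0 [lin_a a_ub]]] | [lo V_B]]; first exact/a_ub/unit_sat.
exact: (delta_eq0_ub (cost_eq0_delta cost0 V_B)).
Qed.

End ZeroCost.

Theorem lemma3p4 (F0 : formula) (B : abounds) (F : formula) :
  uniq (bvars B) ->
  {subset bvars B <= fvars F0} ->
  linearization F0 B F ->
  forall M : assignment, models M F ->
    0 <= cost B M /\ (cost B M = 0 -> models M F0).
Proof.
(* Neither hypothesis on bvars B is needed: duplicate entries only add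
   nonnegative terms to the cost, and bounds on variables outside F0 are harmless. *)
move=> _ _ [steps _] M MF; split=> [|cost0]; first exact: cost_ge0.
have unit_sat a : List.In [:: a] F0 -> lin_atom a -> eval_atom M a.
  move=> a_F0 lin_a; have := all_In MF (lin_steps_unit_linear steps a_F0 lin_a).
  by rewrite /eval_clause /= orbF.
exact: (lin_steps_models_inv (has_lb_sound cost0 unit_sat)
          (has_ub_sound cost0 unit_sat) steps MF).
Qed.
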